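(* Let $P$ be a dcpo such that $\Sigma P$ is well-filtered. The following are equivalent: (1) $\Sigma P$ is locally compact. (2) $\mathsf{K}(\Sigma P)$ is a continuous semilattice, and the upper Vietoris topology and the Scott topology on $\mathsf{K}(\Sigma P)$ coincide. (3) $\mathsf{K}(\Sigma P)$ is a continuous semilattice, and $\Sigma P$ has property Q. (4) $\mathsf{K}(\Sigma P)$ is a continuous semilattice. (5) $\Sigma P$ is core compact.
   Context: A dcpo is a poset in which every directed subset has a supremum. For a poset $Q$, the Scott topology consists of upper sets $U$ such that every directed $D$ whose supremum exists and lies in $U$ meets $U$; $\Sigma Q$ is $Q$ with its Scott topology. For a $T_0$ space $X$: specialization order $x\le y$ iff $x\in\overline{\{y\}}$; saturated = upper set; $\mathsf{K}(X)$ is the set of nonempty compact saturated subsets ordered by reverse inclusion (suprema of families, when they exist, are intersections, which exist iff the intersection is in $\mathsf{K}(X)$); $a\ll b$ in a poset means for every directed $D$ with existing $\bigvee D\ge b$ some $d\in D$ has $d\ge a$; $\mathsf{K}(X)$ is a continuous semilattice if it is directed complete and each $K$ is the directed supremum of $\{L: L\ll K\}$. Upper Vietoris topology on $\mathsf{K}(X)$: base $\{\Box U\}$ with $\Box U=\{K: K\subseteq U\}$, $U$ open. $X$ is well-filtered if for every open $U$ and every family $\mathcal K\subseteq \mathsf{K}(X)$ filtered under inclusion, $\bigcap\mathcal K\subseteq U$ implies some $K\in\mathcal K$ is contained in $U$. Property Q: for all $K_1,K_2\in\mathsf{K}(X)$, $K_1\ll K_2$ iff $K_2\subseteq\operatorname{int}K_1$.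 Locally compact: each point has a neighborhood base of compact sets. Core compact: the lattice of open sets is a continuous lattice. *)

From Stdlib Require Import List.

Definition partial_order {X : Type} (le : X -> X -> Prop) : Prop :=
  (forall x, le x x) /\
  (forall x y z, le x y -> le y z -> le x z) /\
  (forall x y, le x y -> le y x -> x = y).

Definition upper_set {X : Type} (le : X -> X -> Prop) (A : X -> Prop) : Prop :=
  forall x y, A x -> le x y -> A y.

Definition directed {X : Type} (le : X -> X -> Prop) (D : X -> Prop) : Prop :=
  (exists d, D d) /\
  (forall a b, D a -> D b -> exists c, D c /\ le a c /\ le b c).

Definition is_sup {X : Type} (le : X -> X -> Prop) (D : X -> Prop) (s : X) : Prop :=
  (forall d, D d -> le d s) /\
  (forall u, (forall d, D d -> le d u) -> le s u).

Definition directed_complete {X : Type} (le : X -> X -> Prop) : Prop :=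
  forall D, directed le D -> exists s, is_sup le D s.

Definition scott_open {X : Type} (le : X -> X -> Prop) (U : X -> Prop) : Prop :=
  upper_set le U /\
  (forall D s, directed le D -> is_sup le D s -> U s -> exists d, D d /\ U d).

Definition way_below {X : Type} (le : X -> X -> Prop) (a b : X) : Prop :=
  forall D s, directed le D -> is_sup le D s -> le b s -> exists d, D d /\ le a d.

Definition continuous_semilattice {X : Type} (le : X -> X -> Prop) : Prop :=
  directed_complete le /\
  (forall x, directed le (fun y => way_below le y x) /\
             is_sup le (fun y => way_below le y x) x).

Definition continuous_lattice {X : Type} (le : X -> X -> Prop) : Prop :=
  (forall D : X -> Prop, exists s, is_sup le D s) /\
  (forall x, directed le (fun y => way_below le y x) /\
             is_sup le (fun y => way_below le y x) x).

Section Topo.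
Context {X : Type} (opn : (X -> Prop) -> Prop).

Definition specialization (x y : X) : Prop := forall U, opn U -> U x -> U y.

Definition saturated (A : X -> Prop) : Prop := upper_set specialization A.

Definition compact (K : X -> Prop) : Prop :=
  forall F : (X -> Prop) -> Prop,
    (forall U, F U -> opn U) ->
    (forall x, K x -> exists U, F U /\ U x) ->
    exists l : list (X -> Prop),
      (forall U, In U l -> F U) /\ (forall x, K x -> exists U, In U l /\ U x).

Definition interior (A : X -> Prop) (x : X) : Prop :=
  exists U, opn U /\ U x /\ forall y, U y -> A y.

Definition is_KX (K : X -> Prop) : Prop :=
  (exists x, K x) /\ compact K /\ saturated K.

Definition KX : Type := { K : X -> Prop | is_KX K }.

Definition KX_set (K : KX) : X -> Prop := proj1_sig K.

Definition Kle (A B : KX) : Prop := forall x, KX_set B x -> KX_set A x.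

(** upper Vietoris topology on K(X): generated by the base Box U = {K | K ⊆ U} *)
Definition upper_vietoris_open (W : KX -> Prop) : Prop :=
  forall K, W K ->
    exists U, opn U /\ (forall x, KX_set K x -> U x) /\
      (forall L : KX, (forall x, KX_set L x -> U x) -> W L).

Definition well_filtered : Prop :=
  forall (U : X -> Prop) (FK : KX -> Prop),
    opn U ->
    (exists K, FK K) ->
    (forall K1 K2, FK K1 -> FK K2 ->
       exists K3, FK K3 /\ (forall x, KX_set K3 x -> KX_set K1 x /\ KX_set K2 x)) ->
    (forall x, (forall K, FK K -> KX_set K x) -> U x) ->
    exists K, FK K /\ (forall x, KX_set K x -> U x).

Definition property_Q : Prop :=
  forall K1 K2 : KX,
    way_below Kle K1 K2 <-> (forall x, KX_set K2 x -> interior (KX_set K1) x).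

Definition locally_compact : Prop :=
  forall x U, opn U -> U x ->
    exists K, compact K /\ interior K x /\ (forall y, K y -> U y).

Definition OX : Type := { U : X -> Prop | opn U }.
Definition Ole (U V : OX) : Prop := forall x, proj1_sig U x -> proj1_sig V x.

Definition core_compact : Prop := continuous_lattice Ole.

End Topo.

(* If ΣP is locally compact, every K in K(ΣP) is the filtered intersection of the
   L with K ⊆ int L, and well-filteredness shows that these L are exactly those way
   below K.  This gives at once the continuity of K(ΣP), property Q, and the base
   {□ int L} of the Scott topology of K(ΣP).  Conversely, if K(ΣP) is continuous and
   x lies in an open U, some L ≪ ↑x lies in U, and {y | L ≪ ↑y} is a Scott-open
   neighbourhood of x inside L.
   Local compactness always implies core compactness.  For the converse, a point
   x ∈ V ≪ U gives by interpolation a chain U = W₀ ≫ W₁ ≫ ... ≫ V whose intersection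
   is a compact neighbourhood of x.  Compactness reduces to: an open G containing the
   intersection contains some Wₙ.  If not, a Zorn-maximal open set avoiding the chain
   has a complement behaving like an irreducible closed set; a sequence chosen in it
   along the chain has compact upward-closed tails, and these form a decreasing family
   whose intersection lies in G while no member does, contradicting well-filteredness. *)

From Stdlib Require Import List Classical ClassicalEpsilon FunctionalExtensionality
  PropExtensionality Arith Lia.
From mathcomp Require classical_sets.

Local Notation "A ⊆ B" := (forall x, A x -> B x) (at level 70, no associativity).

Lemma zorn_chain_union {T : Type} (Fam : (T -> Prop) -> Prop) :
  (forall C : (T -> Prop) -> Prop, (forall A, C A -> Fam A) ->
     (forall A B, C A -> C B -> A ⊆ B \/ B ⊆ A) ->
     Fam (fun x => exists A, C A /\ A x)) ->
  exists A, Fam A /\ forall B, Fam B -> A ⊆ B -> B ⊆ A.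
Proof.
  intros Hchain.
  destruct (@classical_sets.Zorn_bigcup T Fam) as [A [FA Hmax]].
  - intros C HC Htot.
    replace (classical_sets.bigcup C (fun X => X)) with (fun x => exists A, C A /\ A x).
    + apply Hchain; auto.
    + apply functional_extensionality; intro x; apply propositional_extensionality.
      split; [intros [A [CA Ax]]; exists A|intros [A CA Ax]; exists A]; auto.
  - exists A; split; auto. intros B FB AB x Bx. apply NNPP; intro nAx.
    refine (Hmax B _ FB). split; [exact AB|]. intro BA. apply nAx, BA, Bx.
Qed.

Lemma directed_ext {X : Type} (R : X -> X -> Prop) (A B : X -> Prop) :
  (forall x, A x <-> B x) -> directed R A -> directed R B.
Proof.
  intros E [[d Ad] HA]. split; [exists d; apply E, Ad|].
  intros a b Ba Bb. destruct (HA a b (proj2 (E a) Ba) (proj2 (E b) Bb)) as [c [Ac Hc]].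
  exists c; split; [apply E|]; auto.
Qed.

Lemma is_sup_ext {X : Type} (R : X -> X -> Prop) (A B : X -> Prop) s :
  (forall x, A x <-> B x) -> is_sup R A s -> is_sup R B s.
Proof.
  intros E [Hub Hleast]. split; [intros d Bd; apply Hub, E, Bd|].
  intros u Hu. apply Hleast. intros d Ad. apply Hu, E, Ad.
Qed.

Lemma directed_base_setU_chain {X : Type} (G : X -> Prop) (C : (X -> Prop) -> Prop) :
  (forall A B, C A -> C B -> A ⊆ B \/ B ⊆ A) ->
  directed (fun A B => A ⊆ B)
    (fun V => V = G \/ exists A, C A /\ V = (fun x => G x \/ A x)).
Proof.
  intros Htot. split; [exists G; left; reflexivity|].
  intros V1 V2 [->|[A1 [C1 ->]]] [->|[A2 [C2 ->]]].
  - exists G. split; [left|]; auto.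
  - exists (fun x => G x \/ A2 x). split; [right; exists A2; auto|split; intros x Hx; auto].
  - exists (fun x => G x \/ A1 x). split; [right; exists A1; auto|split; intros x Hx; auto].
  - destruct (Htot A1 A2 C1 C2) as [H12|H21].
    + exists (fun x => G x \/ A2 x). split; [right; exists A2; auto|].
      split; intros x [Gx|Ax]; auto.
    + exists (fun x => G x \/ A1 x). split; [right; exists A1; auto|].
      split; intros x [Gx|Ax]; auto.
Qed.

Section WayBelow.
Context {X : Type} (R : X -> X -> Prop).
Hypothesis R_refl : forall x, R x x.
Hypothesis R_trans : forall x y z, R x y -> R y z -> R x z.

Definition continuous_order : Prop :=
  forall x, directed R (fun y => way_below R y x) /\ is_sup R (fun y => way_below R y x) x.

Lemma way_below_le a b : way_below R a b -> R a b.
Proof.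
  intros Hab. destruct (Hab (fun d => d = b) b) as [d [-> Hd]]; auto.
  - split; [exists b; reflexivity|]. intros ? ? -> ->. exists b; auto.
  - split; [intros d ->; apply R_refl|]. intros u Hu; apply Hu; reflexivity.
Qed.

Lemma way_below_le_trans a b c : way_below R a b -> R b c -> way_below R a c.
Proof. intros Hab Hbc D s HD Hs Hcs. apply (Hab D s HD Hs). eauto. Qed.

Lemma le_way_below_trans a b c : R a b -> way_below R b c -> way_below R a c.
Proof.
  intros Hab Hbc D s HD Hs Hcs. destruct (Hbc D s HD Hs Hcs) as [d [Dd Hbd]].
  exists d; split; eauto.
Qed.

Lemma way_below_interpolate :
  continuous_order -> forall a b, way_below R a b -> exists c, way_below R a c /\ way_below R c b.
Proof.
  intros Hc a b Hab.
  set (I := fun y => exists z, way_below R y z /\ way_below R z b).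
  assert (HI : directed R I).
  { split.
    - destruct (proj1 (proj1 (Hc b))) as [z Hz].
      destruct (proj1 (proj1 (Hc z))) as [y Hy]. exists y, z; auto.
    - intros y1 y2 [z1 [H1 H1']] [z2 [H2 H2']].
      destruct (proj2 (proj1 (Hc b)) z1 z2 H1' H2') as [z3 [H3 [L1 L2]]].
      destruct (proj2 (proj1 (Hc z3)) y1 y2) as [y3 [H4 [L3 L4]]];
        [eapply way_below_le_trans; eauto ..|].
      exists y3; split; [exists z3|]; auto. }
  assert (Hs : is_sup R I b).
  { split.
    - intros y [z [Hyz Hzb]]. apply way_below_le in Hyz, Hzb. eauto.
    - intros u Hu. apply (proj2 (proj2 (Hc b))). intros z Hz.
      apply (proj2 (proj2 (Hc z))). intros y Hy. apply Hu. exists z; auto. }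
  destruct (Hab I b HI Hs (R_refl b)) as [y [[z [Hyz Hzb]] Hay]].
  exists z; split; auto. eapply le_way_below_trans; eauto.
Qed.

Lemma way_below_descending_chain :
  continuous_order -> forall a b, way_below R a b ->
  exists w : nat -> X, w 0 = b /\ (forall n, way_below R a (w n)) /\
                       (forall n, way_below R (w (S n)) (w n)).
Proof.
  intros Hc a b Hab.
  pose (step := fun c => epsilon (inhabits c) (fun d => way_below R a d /\ way_below R d c)).
  assert (Hstep : forall c, way_below R a c ->
                    way_below R a (step c) /\ way_below R (step c) c).
  { intros c Hac. apply epsilon_spec, way_below_interpolate; auto. }
  pose (w := fun n => Nat.iter n step b).
  assert (Hw : forall n, way_below R a (w n)).
  { induction n as [|n IH]; [exact Hab|apply (Hstep _ IH)]. }
  exists w. split; [reflexivity|split; [exact Hw|]]. intro n. apply (Hstep _ (Hw n)).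
Qed.

End WayBelow.

Section Compactness.
Context {X : Type} (opn : (X -> Prop) -> Prop).

Lemma compact_empty : compact opn (fun _ => False).
Proof. intros F _ _. exists nil. split; [intros U []|intros x []]. Qed.

Lemma compact_union K1 K2 :
  compact opn K1 -> compact opn K2 -> compact opn (fun x => K1 x \/ K2 x).
Proof.
  intros H1 H2 F HF Hc.
  destruct (H1 F HF (fun x Kx => Hc x (or_introl Kx))) as [l1 [F1 C1]].
  destruct (H2 F HF (fun x Kx => Hc x (or_intror Kx))) as [l2 [F2 C2]].
  exists (l1 ++ l2). split.
  - intros U HU. apply in_app_or in HU as [HU|HU]; auto.
  - intros x [Kx|Kx]; [destruct (C1 x Kx) as [U [HU Ux]]|destruct (C2 x Kx) as [U [HU Ux]]];
      exists U; split; auto; apply in_or_app; auto.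
Qed.

Lemma compact_directed_cover K (F : (X -> Prop) -> Prop) :
  compact opn K -> (forall U, F U -> opn U) ->
  directed (fun A B => A ⊆ B) F -> K ⊆ (fun x => exists U, F U /\ U x) ->
  exists U, F U /\ K ⊆ U.
Proof.
  intros HK HF [[U0 FU0] HFdir] Hcov.
  destruct (HK F HF Hcov) as [l [Fl Cl]].
  assert (Hbound : exists U, F U /\ forall V, In V l -> V ⊆ U).
  { clear Cl. induction l as [|V l IH].
    - exists U0; split; [exact FU0|intros V []].
    - destruct IH as [U [FU HU]]; [intros W HW; apply Fl; right; exact HW|].
      destruct (HFdir U V FU (Fl V (or_introl eq_refl))) as [U' [FU' [HUU' HVU']]].
      exists U'. split; [exact FU'|].
      intros W [<-|HW] x Wx; [apply HVU', Wx|apply HUU', (HU W HW), Wx]. }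
  destruct Hbound as [U [FU HU]]. exists U. split; [exact FU|].
  intros x Kx. destruct (Cl x Kx) as [V [HV Vx]]. exact (HU V HV x Vx).
Qed.

Lemma compact_tail (s : nat -> X) n :
  (forall U, opn U -> U (s n) -> exists k, forall m, k <= m -> U (s m)) ->
  compact opn (fun y => exists m, n <= m /\ s m = y).
Proof.
  intros Hev F HF Hc.
  destruct (Hc (s n)) as [U0 [FU0 U0n]]; [exists n; auto|].
  destruct (Hev U0 (HF U0 FU0) U0n) as [k Hk].
  assert (Hfin : forall j, exists l, (forall U, In U l -> F U) /\
                   forall m, n <= m -> m < j -> exists U, In U l /\ U (s m)).
  { induction j as [|j [l [Fl Cl]]].
    - exists nil. split; [intros U []|intros m _ Hm; lia].
    - destruct (le_lt_dec n j) as [Hnj|Hjn].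
      + destruct (Hc (s j)) as [U [FU Uj]]; [exists j; auto|].
        exists (U :: l). split; [intros V [<-|HV]; auto|].
        intros m Hnm Hm. destruct (Nat.eq_dec m j) as [->|Hmj].
        * exists U; split; [left|]; auto.
        * destruct (Cl m Hnm) as [V [HV Vm]]; [lia|]. exists V; split; [right|]; auto.
      + exists l. split; [exact Fl|]. intros m Hnm Hm. apply Cl; lia. }
  destruct (Hfin k) as [l [Fl Cl]].
  exists (U0 :: l). split; [intros V [<-|HV]; auto|].
  intros y [m [Hnm <-]]. destruct (le_lt_dec k m) as [Hkm|Hmk].
  - exists U0; split; [left|]; auto.
  - destruct (Cl m Hnm Hmk) as [V [HV Vm]]. exists V; split; [right|]; auto.
Qed.

End Compactness.

Section ScottTopology.
Context {P : Type} (le : P -> P -> Prop).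
Hypothesis le_refl : forall x, le x x.
Hypothesis le_trans : forall x y z, le x y -> le y z -> le x z.

Local Notation Σ := (scott_open le).

Lemma scott_open_upper U x y : Σ U -> U x -> le x y -> U y.
Proof. intros [HU _] Ux Hxy. exact (HU x y Ux Hxy). Qed.

Lemma scott_open_bigcup (I : Type) (S : I -> Prop) (f : I -> P -> Prop) :
  (forall i, S i -> Σ (f i)) -> Σ (fun x => exists i, S i /\ f i x).
Proof.
  intros Hf. split.
  - intros x y [i [Si fx]] Hxy. exists i; split; [|eapply scott_open_upper]; eauto.
  - intros D s HD Hs [i [Si fs]]. destruct (proj2 (Hf i Si) D s HD Hs fs) as [d [Dd fd]].
    exists d; split; [|exists i]; auto.
Qed.

Lemma scott_open_setU A B : Σ A -> Σ B -> Σ (fun x => A x \/ B x).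
Proof.
  intros HA HB. split.
  - intros x y [Ax|Bx] Hxy; [left|right]; eapply scott_open_upper; eauto.
  - intros D s HD Hs [As|Bs].
    + destruct (proj2 HA D s HD Hs As) as [d [Dd Ad]]. exists d; auto.
    + destruct (proj2 HB D s HD Hs Bs) as [d [Dd Bd]]. exists d; auto.
Qed.

Lemma scott_open_setI A B : Σ A -> Σ B -> Σ (fun x => A x /\ B x).
Proof.
  intros HA HB. split.
  - intros x y [Ax Bx] Hxy. split; eapply scott_open_upper; eauto.
  - intros D s HD Hs [As Bs].
    destruct (proj2 HA D s HD Hs As) as [d1 [D1 A1]].
    destruct (proj2 HB D s HD Hs Bs) as [d2 [D2 B2]].
    destruct (proj2 HD d1 d2 D1 D2) as [d3 [D3 [L1 L2]]].
    exists d3; repeat split; auto; eapply scott_open_upper; eauto.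
Qed.

Lemma scott_open_set0 : Σ (fun _ => False).
Proof. split; [intros x y []|intros D s _ _ []]. Qed.

Lemma scott_open_setT : Σ (fun _ => True).
Proof. split; [intros x y _ _; exact I|]. intros D s [[d Dd] _] _ _. exists d; auto. Qed.

Lemma scott_open_not_le y : Σ (fun x => ~ le x y).
Proof.
  split.
  - intros x z Hxy Hxz Hzy. apply Hxy. eauto.
  - intros D s HD Hs Hsy. apply NNPP. intro Hn. apply Hsy, (proj2 Hs).
    intros d Dd. apply NNPP. intro Hdy. apply Hn. exists d; auto.
Qed.

Lemma specialization_scott x y : specialization Σ x y <-> le x y.
Proof.
  split.
  - intros H. apply NNPP. intro Hxy. exact (H _ (scott_open_not_le y) Hxy (le_refl y)).
  - intros Hxy U HU Ux. eapply scott_open_upper; eauto.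
Qed.

Lemma saturated_scott A : saturated Σ A <-> upper_set le A.
Proof.
  unfold saturated, upper_set.
  split; intros H x y Ax Hxy; apply (H x y Ax), specialization_scott; exact Hxy.
Qed.

Lemma interior_scott_open A : Σ (interior Σ A).
Proof.
  split.
  - intros x y [U [HU [Ux HUA]]] Hxy.
    exists U. split; [exact HU|split; [eapply scott_open_upper; eauto|exact HUA]].
  - intros D s HD Hs [U [HU [Us HUA]]]. destruct (proj2 HU D s HD Hs Us) as [d [Dd Ud]].
    exists d. split; [exact Dd|exists U; auto].
Qed.

Lemma interior_subset A : interior Σ A ⊆ A.
Proof. intros x [U [_ [Ux HUA]]]. auto. Qed.

Lemma compact_upper_closure K : compact Σ K -> compact Σ (fun y => exists x, K x /\ le x y).
Proof.
  intros HK F HF Hc.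
  destruct (HK F HF) as [l [Fl Cl]]; [intros x Kx; apply Hc; exists x; auto|].
  exists l. split; [exact Fl|]. intros y [x [Kx Hxy]].
  destruct (Cl x Kx) as [U [HU Ux]]. exists U; split; [|eapply scott_open_upper]; eauto.
Qed.

Lemma is_KX_scott K : (exists x, K x) -> compact Σ K -> upper_set le K -> is_KX Σ K.
Proof. intros Hne HK Hup. repeat split; auto. apply saturated_scott, Hup. Qed.

Lemma KX_nonempty (K : KX Σ) : exists x, KX_set Σ K x.
Proof. exact (proj1 (proj2_sig K)). Qed.

Lemma KX_compact (K : KX Σ) : compact Σ (KX_set Σ K).
Proof. exact (proj1 (proj2 (proj2_sig K))). Qed.

Lemma KX_upper (K : KX Σ) : upper_set le (KX_set Σ K).
Proof. apply saturated_scott. exact (proj2 (proj2 (proj2_sig K))). Qed.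

Lemma is_KX_principal x : is_KX Σ (le x).
Proof.
  apply is_KX_scott; [exists x; apply le_refl| |intros y z Hy Hyz; eauto].
  intros F HF Hc. destruct (Hc x (le_refl x)) as [U [FU Ux]].
  exists (U :: nil). split; [intros V [<-|[]]; auto|].
  intros y Hxy. exists U; split; [left; auto|eapply scott_open_upper; eauto].
Qed.

Definition principal_KX x : KX Σ := exist _ (le x) (is_KX_principal x).

Lemma Kle_refl K : Kle Σ K K.
Proof. intros x; auto. Qed.

Lemma Kle_trans K1 K2 K3 : Kle Σ K1 K2 -> Kle Σ K2 K3 -> Kle Σ K1 K3.
Proof. intros H12 H23 x Hx; auto. Qed.

Lemma Ole_refl U : Ole Σ U U.
Proof. intros x; auto. Qed.

Lemma Ole_trans U V W : Ole Σ U V -> Ole Σ V W -> Ole Σ U W.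
Proof. intros HUV HVW x Hx; auto. Qed.

Definition OX_bigcup (D : OX Σ -> Prop) : OX Σ :=
  exist _ _ (scott_open_bigcup (OX Σ) D (@proj1_sig _ _) (fun V _ => proj2_sig V)).

Lemma is_sup_OX_bigcup D : is_sup (Ole Σ) D (OX_bigcup D).
Proof.
  split.
  - intros V DV x Vx. exists V; auto.
  - intros U HU x [V [DV Vx]]. exact (HU V DV x Vx).
Qed.

Lemma way_below_open_directed_cover (V U : OX Σ) (F : (P -> Prop) -> Prop) :
  way_below (Ole Σ) V U -> (forall G, F G -> Σ G) -> directed (fun A B => A ⊆ B) F ->
  proj1_sig U ⊆ (fun x => exists G, F G /\ G x) -> exists G, F G /\ proj1_sig V ⊆ G.
Proof.
  intros HVU HF [[G0 FG0] HFdir] Hcov.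
  set (D := fun W : OX Σ => exists G, F G /\ proj1_sig W ⊆ G).
  assert (HD : directed (Ole Σ) D).
  { split.
    - exists (exist _ G0 (HF G0 FG0)), G0. split; auto.
    - intros W1 W2 [G1 [F1 H1]] [G2 [F2 H2]].
      destruct (HFdir G1 G2 F1 F2) as [G3 [F3 [L1 L2]]].
      exists (exist _ G3 (HF G3 F3)). split; [exists G3; split; auto|].
      split; intros x Hx; simpl; auto. }
  destruct (HVU D _ HD (is_sup_OX_bigcup D)) as [W [[G [FG HWG]] HVW]].
  - intros x Ux. destruct (Hcov x Ux) as [G [FG Gx]].
    exists (exist _ G (HF G FG)). split; [exists G|]; auto.
  - exists G. split; auto.
Qed.

Lemma way_below_open_finite_subcover (V U : OX Σ) (F : (P -> Prop) -> Prop) :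
  way_below (Ole Σ) V U -> (forall G, F G -> Σ G) ->
  proj1_sig U ⊆ (fun x => exists G, F G /\ G x) ->
  exists l, (forall G, In G l -> F G) /\ proj1_sig V ⊆ (fun x => exists G, In G l /\ G x).
Proof.
  intros HVU HF Hcov.
  set (FU := fun G => exists l, (forall G', In G' l -> F G') /\
                        G = (fun x => exists G', In G' l /\ G' x)).
  destruct (way_below_open_directed_cover V U FU HVU) as [G [[l [Fl ->]] HVG]].
  - intros G [l [Fl ->]]. apply (scott_open_bigcup (P -> Prop)). auto.
  - split.
    + exists (fun _ => False), nil. split; [intros G []|].
      apply functional_extensionality; intro x; apply propositional_extensionality.
      split; [intros []|intros [G [[] _]]].
    + intros G1 G2 [l1 [F1 ->]] [l2 [F2 ->]]. exists (fun x => exists G', In G' (l1 ++ l2) /\ G' x).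
      split; [exists (l1 ++ l2); split; [intros G HG; apply in_app_or in HG as []|]; auto|].
      split; intros x [G [HG Gx]]; exists G; split; auto; apply in_or_app; auto.
  - intros x Ux. destruct (Hcov x Ux) as [G [FG Gx]].
    exists G. split; [|exact Gx]. exists (G :: nil). split; [intros G' [<-|[]]; auto|].
    apply functional_extensionality; intro y; apply propositional_extensionality.
    split; [intros Gy; exists G; split; [left|]; auto|intros [G' [[<-|[]] Gy]]; auto].
  - exists l. split; auto.
Qed.

Lemma compact_way_below_open K (V U : OX Σ) :
  compact Σ K -> proj1_sig V ⊆ K -> K ⊆ proj1_sig U -> way_below (Ole Σ) V U.
Proof.
  intros HK HVK HKU D s HD Hs HUs.
  set (F := fun G => exists W, D W /\ G = proj1_sig W).
  destruct (compact_directed_cover Σ K F HK) as [G [[W [DW ->]] HKW]].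
  - intros G [W [_ ->]]. apply proj2_sig.
  - split.
    + destruct (proj1 HD) as [W DW]. exists (proj1_sig W), W; auto.
    + intros G1 G2 [W1 [D1 ->]] [W2 [D2 ->]].
      destruct (proj2 HD W1 W2 D1 D2) as [W3 [D3 [L1 L2]]].
      exists (proj1_sig W3). split; [exists W3|]; auto.
  - intros x Kx.
    destruct (proj2 Hs _ (proj1 (is_sup_OX_bigcup D)) x (HUs x (HKU x Kx))) as [W [DW Wx]].
    exists (proj1_sig W). split; [exists W|]; auto.
  - exists W. split; auto. intros x Vx. apply HKW, HVK, Vx.
Qed.

Lemma locally_compact_core_compact : locally_compact Σ -> core_compact Σ.
Proof.
  intros HLC. split; [intros D; exists (OX_bigcup D); apply is_sup_OX_bigcup|].
  intros U. split; [split|split].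
  - exists (exist _ _ scott_open_set0).
    intros D s [[d Dd] _] _ _. exists d. split; [auto|intros x []].
  - intros V1 V2 H1 H2.
    exists (exist _ _ (scott_open_setU _ _ (proj2_sig V1) (proj2_sig V2))).
    split; [|split; intros x Hx; simpl; auto].
    intros D s HD Hs HUs.
    destruct (H1 D s HD Hs HUs) as [d1 [D1 L1]].
    destruct (H2 D s HD Hs HUs) as [d2 [D2 L2]].
    destruct (proj2 HD d1 d2 D1 D2) as [d3 [D3 [L3 L4]]].
    exists d3. split; [auto|intros x [Hx|Hx]; [apply L3, L1|apply L4, L2]; exact Hx].
  - intros V HV. apply (way_below_le (Ole Σ) Ole_refl), HV.
  - intros W HW x Ux.
    destruct (HLC x (proj1_sig U) (proj2_sig U) Ux) as [K [HK [Hx HKU]]].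
    apply (HW (exist _ _ (interior_scott_open K))); [|exact Hx].
    apply (compact_way_below_open K); auto. apply interior_subset.
Qed.

Section WellFiltered.
Hypothesis Hwf : well_filtered Σ.

Definition KX_inter (D : KX Σ -> Prop) : P -> Prop := fun x => forall K, D K -> KX_set Σ K x.

Lemma well_filtered_directed (D : KX Σ -> Prop) U :
  directed (Kle Σ) D -> Σ U -> KX_inter D ⊆ U -> exists K, D K /\ KX_set Σ K ⊆ U.
Proof.
  intros [Dne HD] HU HDU. apply Hwf; auto.
  intros K1 K2 D1 D2. destruct (HD K1 K2 D1 D2) as [K3 [D3 [L1 L2]]].
  exists K3; split; auto.
Qed.

Lemma is_KX_inter (D : KX Σ -> Prop) : directed (Kle Σ) D -> is_KX Σ (KX_inter D).
Proof.
  intros HD. apply is_KX_scott.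
  - apply NNPP. intro Hempty.
    destruct (well_filtered_directed D _ HD scott_open_set0) as [K [_ HK]].
    + intros x Hx. apply Hempty. exists x; exact Hx.
    + destruct (KX_nonempty K) as [x Kx]. exact (HK x Kx).
  - intros F HF Hc.
    destruct (well_filtered_directed D (fun x => exists U, F U /\ U x) HD) as [K [DK HK]];
      [apply (scott_open_bigcup (P -> Prop)); auto|exact Hc|].
    destruct (KX_compact K F HF HK) as [l [Fl Cl]]. exists l. split; [exact Fl|].
    intros x Hx. apply Cl, Hx, DK.
  - intros x y Hx Hxy K DK. exact (KX_upper K x y (Hx K DK) Hxy).
Qed.

Lemma is_sup_KX_inter (D : KX Σ -> Prop) (HD : directed (Kle Σ) D) :
  is_sup (Kle Σ) D (exist _ _ (is_KX_inter D HD)).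
Proof.
  split.
  - intros K DK x Hx. exact (Hx K DK).
  - intros L HL x Lx K DK. exact (HL K DK x Lx).
Qed.

Lemma KX_directed_complete : directed_complete (Kle Σ).
Proof. intros D HD. eexists. apply (is_sup_KX_inter D HD). Qed.

Lemma well_filtered_sup (D : KX Σ -> Prop) s U :
  directed (Kle Σ) D -> is_sup (Kle Σ) D s -> Σ U -> KX_set Σ s ⊆ U ->
  exists K, D K /\ KX_set Σ K ⊆ U.
Proof.
  intros HD Hs HU HsU. apply well_filtered_directed; auto.
  intros x Hx. apply HsU, (proj2 Hs _ (proj1 (is_sup_KX_inter D HD))), Hx.
Qed.

Lemma well_filtered_seq (K : nat -> P -> Prop) U :
  (forall n, is_KX Σ (K n)) -> (forall n, K (S n) ⊆ K n) -> Σ U ->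
  (fun x => forall n, K n x) ⊆ U -> exists n, K n ⊆ U.
Proof.
  intros HK Hdec HU HKU.
  assert (Hanti : forall n m, n <= m -> K m ⊆ K n).
  { intros n m Hnm. induction Hnm as [|m Hnm IH]; auto. }
  destruct (Hwf U (fun L => exists n, L = exist _ (K n) (HK n)) HU) as [L [[n ->] HL]].
  - exists (exist _ (K 0) (HK 0)), 0; reflexivity.
  - intros L1 L2 [n1 ->] [n2 ->]. exists (exist _ (K (max n1 n2)) (HK (max n1 n2))).
    split; [eexists; reflexivity|]. intros x Hx; simpl in *.
    split; apply (Hanti _ (max n1 n2)); auto; lia.
  - intros x Hx. apply HKU. intro n. exact (Hx _ (ex_intro _ n eq_refl)).
  - exists n. exact HL.
Qed.

Lemma interior_way_below (K1 K2 : KX Σ) :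
  KX_set Σ K2 ⊆ interior Σ (KX_set Σ K1) -> way_below (Kle Σ) K1 K2.
Proof.
  intros H D s HD Hs HK2s.
  destruct (well_filtered_sup D s _ HD Hs (interior_scott_open (KX_set Σ K1))) as [K [DK HK]].
  - intros x Hx. apply H, HK2s, Hx.
  - exists K. split; [exact DK|]. intros x Hx. apply interior_subset, HK, Hx.
Qed.

Lemma upper_vietoris_scott_open (W : KX Σ -> Prop) :
  upper_vietoris_open Σ W -> scott_open (Kle Σ) W.
Proof.
  intros HW. split.
  - intros K L WK HKL. destruct (HW K WK) as [U [HU [HKU HUW]]].
    apply HUW. intros x Lx. apply HKU, HKL, Lx.
  - intros D s HD Hs Ws. destruct (HW s Ws) as [U [HU [HsU HUW]]].
    destruct (well_filtered_sup D s U HD Hs HU HsU) as [K [DK HK]].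
    exists K. split; auto.
Qed.

Section LocallyCompact.
Hypothesis HLC : locally_compact Σ.

Lemma locally_compact_compact_nbhd K W :
  Σ W -> compact Σ K -> K ⊆ W ->
  exists U L, Σ U /\ compact Σ L /\ K ⊆ U /\ U ⊆ L /\ L ⊆ W.
Proof.
  intros HW HK HKW.
  set (F := fun U => Σ U /\ exists L, compact Σ L /\ U ⊆ L /\ L ⊆ W).
  destruct (compact_directed_cover Σ K F HK) as [U [[HU [L [HL [HUL HLW]]]] HKU]].
  - intros U [HU _]. exact HU.
  - split.
    + exists (fun _ => False). split; [exact scott_open_set0|].
      exists (fun _ => False). split; [apply compact_empty|split; intros x []].
    + intros U1 U2 [HU1 [L1 [C1 [S1 W1]]]] [HU2 [L2 [C2 [S2 W2]]]].
      exists (fun x => U1 x \/ U2 x). split; [split; [apply scott_open_setU; auto|]|].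
      * exists (fun x => L1 x \/ L2 x).
        split; [apply compact_union; auto|split; intros x [Hx|Hx]; auto].
      * split; intros x Hx; auto.
  - intros x Kx. destruct (HLC x W HW (HKW x Kx)) as [L [HL [[U [HU [Ux HUL]]] HLW]]].
    exists U. split; [split; [|exists L]|]; auto.
  - exists U, L. auto.
Qed.

Lemma locally_compact_KX_between (K : KX Σ) W :
  Σ W -> KX_set Σ K ⊆ W ->
  exists L : KX Σ, KX_set Σ K ⊆ interior Σ (KX_set Σ L) /\ KX_set Σ L ⊆ W.
Proof.
  intros HW HKW.
  destruct (locally_compact_compact_nbhd (KX_set Σ K) W HW (KX_compact K) HKW)
    as [U [L [HU [HL [HKU [HUL HLW]]]]]].
  assert (HL' : is_KX Σ (fun y => exists x, L x /\ le x y)).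
  { apply is_KX_scott.
    - destruct (KX_nonempty K) as [x Kx]. exists x, x. split; [apply HUL, HKU, Kx|apply le_refl].
    - apply compact_upper_closure, HL.
    - intros y z [x [Lx Hxy]] Hyz. exists x; split; eauto. }
  exists (exist _ _ HL'). split.
  - intros x Kx. exists U. split; [exact HU|split; [apply HKU, Kx|]].
    intros y Uy. exists y. split; [apply HUL, Uy|apply le_refl].
  - intros y [x [Lx Hxy]]. eapply scott_open_upper; eauto.
Qed.

Definition KX_interior_approx (K : KX Σ) : KX Σ -> Prop :=
  fun L => KX_set Σ K ⊆ interior Σ (KX_set Σ L).

Lemma KX_interior_approx_sup (K : KX Σ) :
  directed (Kle Σ) (KX_interior_approx K) /\ is_sup (Kle Σ) (KX_interior_approx K) K.
Proof.
  split; [split|split].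
  - destruct (locally_compact_KX_between K _ scott_open_setT) as [L [HKL _]]; [auto|].
    exists L; exact HKL.
  - intros L1 L2 H1 H2.
    destruct (locally_compact_KX_between K
                (fun x => interior Σ (KX_set Σ L1) x /\ interior Σ (KX_set Σ L2) x))
      as [L3 [H3 H4]];
      [apply scott_open_setI; apply interior_scott_open|intros x Kx; split; auto|].
    exists L3. split; [exact H3|split; intros x Hx; apply interior_subset, (H4 x Hx)].
  - intros L HL x Kx. apply interior_subset, HL, Kx.
  - intros M HM y My. apply NNPP. intro HKy.
    destruct (locally_compact_KX_between K _ (scott_open_not_le y)) as [L [HKL HLy]].
    + intros z Kz Hzy. apply HKy. exact (KX_upper K z y Kz Hzy).
    + exact (HLy y (HM L HKL y My) (le_refl y)).
Qed.

Lemma way_below_KX_iff (K1 K2 : KX Σ) :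
  way_below (Kle Σ) K1 K2 <-> KX_set Σ K2 ⊆ interior Σ (KX_set Σ K1).
Proof.
  split; [|apply interior_way_below].
  intros H. destruct (KX_interior_approx_sup K2) as [HD Hs].
  destruct (H _ K2 HD Hs (Kle_refl K2)) as [L [HL HK1L]].
  intros x Kx. destruct (HL x Kx) as [U [HU [Ux HUL]]].
  exists U. split; [exact HU|split; [exact Ux|intros y Uy; apply HK1L, HUL, Uy]].
Qed.

Lemma locally_compact_continuous_KX : continuous_semilattice (Kle Σ).
Proof.
  split; [exact KX_directed_complete|]. intro K.
  destruct (KX_interior_approx_sup K) as [HD Hs].
  split; [eapply directed_ext|eapply is_sup_ext]; eauto; intro L; symmetry; apply way_below_KX_iff.
Qed.

Lemma locally_compact_property_Q : property_Q Σ.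
Proof. intros K1 K2. apply way_below_KX_iff. Qed.

Lemma locally_compact_upper_vietoris_iff_scott (W : KX Σ -> Prop) :
  upper_vietoris_open Σ W <-> scott_open (Kle Σ) W.
Proof.
  split; [apply upper_vietoris_scott_open|].
  intros [Hup Hin] K WK. destruct (KX_interior_approx_sup K) as [HD Hs].
  destruct (Hin _ K HD Hs WK) as [L [HL WL]].
  exists (interior Σ (KX_set Σ L)). split; [apply interior_scott_open|split; [exact HL|]].
  intros M HM. apply (Hup L M WL). intros x Mx. apply interior_subset, HM, Mx.
Qed.

End LocallyCompact.

Lemma principal_KX_directed_sup (D : P -> Prop) s :
  directed le D -> is_sup le D s ->
  let DK := fun K => exists d, D d /\ K = principal_KX d in
  directed (Kle Σ) DK /\ is_sup (Kle Σ) DK (principal_KX s).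
Proof.
  intros [[d0 D0] HD] Hs DK. split; [split|split].
  - exists (principal_KX d0), d0; auto.
  - intros K1 K2 [d1 [D1 ->]] [d2 [D2 ->]].
    destruct (HD d1 d2 D1 D2) as [d3 [D3 [L1 L2]]].
    exists (principal_KX d3). split; [exists d3; auto|split; intros z Hz; simpl in *; eauto].
  - intros K [d [Dd ->]] z Hsz. simpl in *. eapply le_trans; [apply (proj1 Hs d Dd)|exact Hsz].
  - intros K HK z Kz. simpl. apply (proj2 Hs). intros d Dd.
    exact (HK _ (ex_intro _ d (conj Dd eq_refl)) z Kz).
Qed.

Lemma scott_open_way_below_principal (L : KX Σ) :
  continuous_order (Kle Σ) -> Σ (fun y => way_below (Kle Σ) L (principal_KX y)).
Proof.
  intros Hc. split.
  - intros y z Hy Hyz. apply (way_below_le_trans (Kle Σ) Kle_trans _ _ _ Hy).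
    intros w Hw. simpl in *. eauto.
  - intros D s HD Hs Hwb.
    destruct (way_below_interpolate (Kle Σ) Kle_refl Kle_trans Hc _ _ Hwb) as [M [HLM HMs]].
    destruct (principal_KX_directed_sup D s HD Hs) as [HDK HsK].
    destruct (HMs _ _ HDK HsK (Kle_refl _)) as [K [[d [Dd ->]] HMd]].
    exists d. split; [exact Dd|]. exact (way_below_le_trans (Kle Σ) Kle_trans _ _ _ HLM HMd).
Qed.

Lemma continuous_KX_locally_compact : continuous_semilattice (Kle Σ) -> locally_compact Σ.
Proof.
  intros [_ Hc] x U HU Ux.
  destruct (Hc (principal_KX x)) as [HD Hs].
  destruct (well_filtered_sup _ (principal_KX x) U HD Hs HU) as [L [HLx HLU]];
    [intros y Hxy; eapply scott_open_upper; eauto|].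
  exists (KX_set Σ L). split; [apply KX_compact|split; [|exact HLU]].
  exists (fun y => way_below (Kle Σ) L (principal_KX y)).
  split; [apply scott_open_way_below_principal; exact Hc|split; [exact HLx|]].
  intros y Hy. apply (way_below_le (Kle Σ) Kle_refl) in Hy. apply Hy, le_refl.
Qed.

Section DescendingChain.
Variable W : nat -> OX Σ.
Hypothesis HW : forall n, way_below (Ole Σ) (W (S n)) (W n).

Lemma chain_antitone n m : n <= m -> proj1_sig (W m) ⊆ proj1_sig (W n).
Proof.
  intros Hnm. induction Hnm as [|m Hnm IH]; auto.
  intros x Hx. apply IH, (way_below_le (Ole Σ) Ole_refl _ _ (HW m)), Hx.
Qed.

Definition chain_inter : P -> Prop := fun x => forall n, proj1_sig (W n) x.

Section Avoiding.
Variable G : P -> Prop.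
Hypothesis HG : Σ G.
Hypothesis HGout : forall n, ~ proj1_sig (W n) ⊆ G.

Definition avoids_chain (A : P -> Prop) : Prop :=
  Σ A /\ forall n, ~ proj1_sig (W n) ⊆ (fun x => G x \/ A x).

Lemma avoids_chain_union (C : (P -> Prop) -> Prop) :
  (forall A, C A -> avoids_chain A) -> (forall A B, C A -> C B -> A ⊆ B \/ B ⊆ A) ->
  avoids_chain (fun x => exists A, C A /\ A x).
Proof.
  intros HC Htot. split.
  - apply (scott_open_bigcup (P -> Prop)). intros A CA. apply (HC A CA).
  - intros n Hn.
    set (F := fun V => V = G \/ exists A, C A /\ V = (fun x => G x \/ A x)).
    destruct (way_below_open_directed_cover (W (S n)) (W n) F (HW n)) as [V [FV HV]].
    + intros V [->|[A [CA ->]]]; [exact HG|apply scott_open_setU; [exact HG|apply (HC A CA)]].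
    + apply directed_base_setU_chain; exact Htot.
    + intros x Wx. destruct (Hn x Wx) as [Gx|[A [CA Ax]]].
      * exists G. split; [left|]; auto.
      * exists (fun y => G y \/ A y). split; [right; exists A|right]; auto.
    + destruct FV as [->|[A [CA ->]]];
        [exact (HGout (S n) HV)|exact (proj2 (HC A CA) (S n) HV)].
Qed.

(* Maximality of [A] makes every open set meeting the complement of [A] contain
   the part of that complement lying in some [W k]. *)
Lemma chain_generic_sequence :
  exists x : nat -> P, (forall n, proj1_sig (W n) (x n) /\ ~ G (x n)) /\
    forall n U, Σ U -> U (x n) -> exists k, forall m, k <= m -> U (x m).
Proof.
  destruct (zorn_chain_union avoids_chain avoids_chain_union) as [A [[HA HAout] Hmax]].
  assert (HGA : G ⊆ A).
  { intros y Gy. apply (Hmax (fun x => G x \/ A x)); [|intros z Az; right; exact Az|left; exact Gy].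
    split; [apply scott_open_setU; auto|]. intros n Hn. apply (HAout n).
    intros z Wz. destruct (Hn z Wz); tauto. }
  destruct (choice (fun n y => proj1_sig (W n) y /\ ~ A y)) as [x Hx].
  { intro n. apply NNPP. intro Hn. apply (HAout n). intros y Wy. right.
    apply NNPP. intro Ay. apply Hn. exists y; auto. }
  exists x. split; [intro n; split; [apply Hx|intro Gx; apply (proj2 (Hx n)), HGA, Gx]|].
  intros n U HU Ux.
  assert (HnotAv : ~ avoids_chain (fun y => A y \/ U y)).
  { intro Hav. apply (proj2 (Hx n)).
    apply (Hmax _ Hav); [intros y Ay; left; exact Ay|right; exact Ux]. }
  assert (Hk : exists k, proj1_sig (W k) ⊆ (fun y => G y \/ A y \/ U y)).
  { apply NNPP. intro Hk. apply HnotAv. split; [apply scott_open_setU; auto|].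
    intros k Hin. apply Hk. exists k. exact Hin. }
  destruct Hk as [k Hk]. exists k. intros m Hkm.
  destruct (Hk (x m) (chain_antitone k m Hkm _ (proj1 (Hx m)))) as [Gxm|[Axm|Uxm]];
    [destruct (proj2 (Hx m)); apply HGA, Gxm|destruct (proj2 (Hx m) Axm)|exact Uxm].
Qed.

Lemma chain_inter_not_inside : ~ chain_inter ⊆ G.
Proof.
  intros HKG. destruct chain_generic_sequence as [x [Hx Hev]].
  set (T := fun n y => exists m, n <= m /\ x m = y).
  set (K := fun n y => exists z, T n z /\ le z y).
  assert (HK : forall n, is_KX Σ (K n)).
  { intro n. apply is_KX_scott.
    - exists (x n), (x n). split; [exists n; auto|apply le_refl].
    - apply compact_upper_closure, compact_tail, Hev.
    - intros y z [w [Tw Hwy]] Hyz. exists w; split; eauto. }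
  destruct (well_filtered_seq K G HK) as [n Hn]; [|exact HG| |].
  - intros n y [z [[m [Hm <-]] Hzy]]. exists (x m). split; [exists m; split; [lia|]|]; auto.
  - intros y Hy. apply HKG. intro k. destruct (Hy k) as [z [[m [Hkm <-]] Hzy]].
    eapply scott_open_upper; [apply proj2_sig| |exact Hzy].
    apply (chain_antitone k m Hkm), Hx.
  - apply (proj2 (Hx n)), Hn. exists (x n). split; [exists n; auto|apply le_refl].
Qed.

End Avoiding.

Lemma chain_eventually_inside G :
  Σ G -> chain_inter ⊆ G -> exists n, proj1_sig (W n) ⊆ G.
Proof.
  intros HG HKG. apply NNPP. intro Hn.
  apply (chain_inter_not_inside G HG); [|exact HKG].
  intros n HnG. apply Hn. exists n. exact HnG.
Qed.

Lemma compact_chain_inter : compact Σ chain_inter.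
Proof.
  intros F HF Hcov.
  destruct (chain_eventually_inside (fun x => exists U, F U /\ U x)) as [n Hn];
    [apply (scott_open_bigcup (P -> Prop)); auto|exact Hcov|].
  destruct (way_below_open_finite_subcover (W (S n)) (W n) F (HW n) HF Hn) as [l [Fl Cl]].
  exists l. split; [exact Fl|]. intros x Kx. apply Cl, Kx.
Qed.

End DescendingChain.

Lemma core_compact_locally_compact : core_compact Σ -> locally_compact Σ.
Proof.
  intros [_ Hc] x U HU Ux.
  set (U0 := exist _ U HU : OX Σ).
  assert (HV : exists V, way_below (Ole Σ) V U0 /\ proj1_sig V x).
  { destruct (Hc U0) as [_ [_ Hleast]].
    destruct (Hleast _ (proj1 (is_sup_OX_bigcup _)) x Ux) as [V [HV Vx]]. exists V; auto. }
  destruct HV as [V [HVU Vx]].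
  destruct (way_below_descending_chain (Ole Σ) Ole_refl Ole_trans Hc V U0 HVU)
    as [W [HW0 [HVW HW]]].
  exists (chain_inter W). split; [apply compact_chain_inter, HW|split].
  - exists (proj1_sig V). split; [apply proj2_sig|split; [exact Vx|]].
    intros y Vy n. apply (way_below_le (Ole Σ) Ole_refl _ _ (HVW n)), Vy.
  - intros y Hy. specialize (Hy 0). rewrite HW0 in Hy. exact Hy.
Qed.

End WellFiltered.

End ScottTopology.

Theorem mainTheorem8 (P : Type) (le : P -> P -> Prop)
  (Hpo : partial_order le) (Hdcpo : directed_complete le)
  (Hwf : well_filtered (scott_open le)) :
  (locally_compact (scott_open le) <->
     continuous_semilattice (Kle (scott_open le)) /\
     (forall W : KX (scott_open le) -> Prop,
        upper_vietoris_open (scott_open le) W <-> scott_open (Kle (scott_open le)) W)) /\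
  (locally_compact (scott_open le) <->
     continuous_semilattice (Kle (scott_open le)) /\ property_Q (scott_open le)) /\
  (locally_compact (scott_open le) <->
     continuous_semilattice (Kle (scott_open le))) /\
  (locally_compact (scott_open le) <-> core_compact (scott_open le)).
Proof.
  destruct Hpo as [le_refl [le_trans _]].
  pose proof (continuous_KX_locally_compact le le_refl le_trans Hwf) as CS_LC.
  pose proof (locally_compact_continuous_KX le le_refl le_trans Hwf) as LC_CS.
  split; [|split; [|split]].
  - split; [|intros [HCS _]; exact (CS_LC HCS)].
    intros HLC. split; [exact (LC_CS HLC)|].
    exact (locally_compact_upper_vietoris_iff_scott le le_refl le_trans Hwf HLC).
  - split; [|intros [HCS _]; exact (CS_LC HCS)].
    intros HLC. split; [exact (LC_CS HLC)|].
    exact (locally_compact_property_Q le le_refl le_trans Hwf HLC).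
  - split; [exact LC_CS|exact CS_LC].
  - split; [exact (locally_compact_core_compact le)|].
    exact (core_compact_locally_compact le le_refl le_trans Hwf).
Qed.
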